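(* Let $q\in\mathbb{N}^+$, let $G=(V,E)$ be a finite $(q+1)$-regular graph (multi-edges and loops allowed), let $\mathcal G$ be a subgroup of the unitary group $U(N)$, and let $\sigma$ be a $\mathcal G$-color on $G$. Then for every $r\in\mathbb{N}$, $$A^\sigma_r=q^{r/2}X_{r,q}(q^{-1/2}A^\sigma).$$
   Context: Each element of $E$ gives two distinct directed edges $e,\overline e$ (mutually inverse), forming $\vec E$, with origin $o(e)$ and terminus $t(e)$; $(q+1)$-regular means every vertex is the origin of exactly $q+1$ directed edges. A walk of length $n\ge1$ is a sequence of directed edges $e_1,\dots,e_n$ with $t(e_i)=o(e_{i+1})$; it is non-backtracking if $e_{i+1}\neq\overline{e_i}$ for all $i$. A $\mathcal G$-color is a map $\sigma:\vec E\to\mathcal G$ with $\sigma(\overline e)=\sigma(e)^{-1}$; the color of a walk $\gamma=(e_1,\dots,e_n)$ is $\sigma_\gamma=\sigma(e_1)\sigma(e_2)\cdots\sigma(e_n)$. $A^\sigma$ is the $N|V|\times N|V|$ block matrix with $N\times N$ blocks $(A^\sigma)_{ij}=\sum_{e\in\vec E: o(e)=i,t(e)=j}\sigma(e)$ (zero block if none). The colored non-backtracking matrix $A^\sigma_r$ is the block matrix with $(A^\sigma_r)_{ij}=\sum_{\gamma}\sigma_\gamma$, summed over all non-backtracking walks $\gamma$ of length $r$ from $i$ to $j$, for $r\ge1$, and $A^\sigma_0=I$. The polynomials $X_{r,q}$ are defined by $\sum_{r\ge0}X_{r,q}(x)t^r=\frac{1-q^{-1}t^2}{1-xt+t^2}$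 for $|t|$ small; explicitly $X_{r,q}=X_r-q^{-1}X_{r-2}$ with $X_r(x)=\sum_{0\le k\le r/2}(-1)^k\binom{r-k}{k}x^{r-2k}$ and $X_r\equiv0$ for $r<0$. *)

From HB Require Import structures.
From mathcomp Require Import all_boot all_order all_algebra all_field.
From mathcomp Require Import spectral.
Set Implicit Arguments. Unset Strict Implicit. Unset Printing Implicit Defensive.
Import Order.TTheory GRing.Theory Num.Theory.
Local Open Scope ring_scope.

(* Graph with vertex set 'I_n, finite type D of directed edges, the edge
   reversal inv (e |-> \overline e), and the origin map o.  The terminus is
   t e := o (inv e). *)
Section Graph.
Variables (n : nat) (D : finType) (inv : D -> D) (o : D -> 'I_n).

Definition term (e : D) : 'I_n := o (inv e).

Definition graph_ok : Prop := involutive inv /\ forall e, inv e != e.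

Definition regular (q : nat) : Prop := forall v : 'I_n, #|[set e | o e == v]| = q.+1.

Definition nbstep (e f : D) : bool := (term e == o f) && (f != inv e).

Definition nbwalk_from_to (i j : 'I_n) (s : seq D) : bool :=
  if s is e :: s' then [&& path nbstep e s', o e == i & term (last e s') == j]
  else false.

Variable N : nat.

Definition colored_adj (sigma : D -> 'M[algC]_N) : 'M[algC]_(\sum_(i < n) N) :=
  @mxblock algC n n (fun=> N) (fun=> N)
    (fun i j => \sum_(e : D | (o e == i) && (term e == j)) sigma e).

Definition colored_nb (sigma : D -> 'M[algC]_N) (r : nat) : 'M[algC]_(\sum_(i < n) N) :=
  if r is 0 then 1%:M else
  @mxblock algC n n (fun=> N) (fun=> N)
    (fun i j => \sum_(w : r.-tuple D | nbwalk_from_to i j w) \prod_(e <- w) sigma e).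

End Graph.

Definition unitary_subgroup N (Gs : {pred 'M[algC]_N}) : Prop :=
  [/\ 1%:M \in Gs,
      {in Gs &, forall A B, A *m B \in Gs},
      {in Gs, forall A, invmx A \in Gs} &
      {subset Gs <= unitarymx}].

Definition is_color (D : finType) (inv : D -> D) N (Gs : {pred 'M[algC]_N})
  (sigma : D -> 'M[algC]_N) : Prop :=
  (forall e, sigma e \in Gs) /\ (forall e, sigma (inv e) = invmx (sigma e)).

Definition Xpoly (r : nat) : {poly algC} :=
  \sum_(k < r./2.+1) (((-1) ^+ k * ('C(r - k, k))%:R) *: 'X^(r - k.*2)).

Definition Xrq (q r : nat) : {poly algC} :=
  Xpoly r - (q%:R)^-1 *: (if r is r'.+2 then Xpoly r' else 0).

Definition mxpeval m (p : {poly algC}) (A : 'M[algC]_m) : 'M[algC]_m :=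
  \sum_(i < size p) p`_i *: A ^+ i.

From HB Require Import structures.
From mathcomp Require Import all_boot all_order all_algebra all_field.
From mathcomp Require Import spectral zify ring.
Import Order.TTheory GRing.Theory Num.Theory.
Local Open Scope ring_scope.
Set Implicit Arguments. Unset Strict Implicit. Unset Printing Implicit Defensive.

(* Both sides satisfy the same three-term recurrence in r.  Splitting the
   product A^sigma A^sigma_r according to whether the appended step
   backtracks, the backtracking walks contribute q A^sigma_(r-1) for r >= 2
   (each vertex has q other outgoing edges, and sigma(e) sigma(inv e) = 1)
   and (q+1) I for r = 1.  This is the recurrence of the Chebyshev-type
   polynomials X_r, which X_{r,q} inherits; the rescaling by q^(r/2) turns
   it into A_{r+1} = A A_r - q A_{r-1}. *)

Definition Xcoef (r k : nat) : algC := (-1) ^+ k * ('C(r - k, k))%:R.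

Lemma Xcoef0 r : Xcoef r 0 = 1.
Proof. by rewrite /Xcoef expr0 bin0 mul1r. Qed.

Lemma Xcoef_small r k : (r < k.*2)%N -> Xcoef r k = 0.
Proof. by move=> lt_r_2k; rewrite /Xcoef bin_small ?mulr0 //; lia. Qed.

Lemma XcoefSS r k : Xcoef r.+2 k.+1 = Xcoef r.+1 k.+1 - Xcoef r k.
Proof.
rewrite /Xcoef !subSS exprS; have [le_kr | lt_rk] := leqP k r.
  by rewrite subSn // binS natrD; ring.
have [-> ->] : (r.+1 - k = 0 /\ r - k = 0)%N by lia.
by rewrite !bin0n (gtn_eqF (leq_ltn_trans (leq0n r) lt_rk)) /= !mulr0 subr0.
Qed.

Lemma Xpoly_widen r K : (r./2 < K)%N ->
  Xpoly r = \sum_(k < K) Xcoef r k *: 'X^(r - k.*2).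
Proof.
move=> lt_r2_K; rewrite /Xpoly.
rewrite (big_ord_widen K (fun k => Xcoef r k *: 'X^(r - k.*2)) lt_r2_K) big_mkcond.
apply: eq_bigr => k _; case: ltnP => // le_k_r2.
by rewrite Xcoef_small ?scale0r //; have := odd_double_half r; lia.
Qed.

Lemma Xpoly0 : Xpoly 0 = 1.
Proof. by rewrite (@Xpoly_widen _ 1) // big_ord1 Xcoef0 scale1r. Qed.

Lemma Xpoly1 : Xpoly 1 = 'X.
Proof. by rewrite (@Xpoly_widen _ 1) // big_ord1 Xcoef0 scale1r. Qed.

Lemma XpolySS r : Xpoly r.+2 = 'X * Xpoly r.+1 - Xpoly r.
Proof.
have half_lt m : (m./2 < m.+1)%N by have := odd_double_half m; lia.
rewrite (@Xpoly_widen r.+2 r.+3) // (@Xpoly_widen r.+1 r.+3) ?(leq_trans (half_lt _)) //.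
rewrite (@Xpoly_widen r r.+2) ?(leq_trans (half_lt _)) // mulr_sumr.
rewrite big_ord_recl [in RHS]big_ord_recl -addrA -sumrB /= !Xcoef0 !scale1r !subn0 -exprS.
congr (_ + _); apply: eq_bigr => k _; rewrite /bump /= add1n XcoefSS scalerBl.
have -> : (r.+2 - k.+1.*2 = r - k.*2)%N by lia.
have [le_2k_r | lt_r_2k] := leqP k.+1.*2 r.+1; last by rewrite Xcoef_small ?scale0r ?mulr0.
by rewrite -scalerAr -exprS; congr (_ *: 'X^_ - _); lia.
Qed.

Lemma Xrq0 q : Xrq q 0 = 1.
Proof. by rewrite /Xrq /= Xpoly0 scaler0 subr0. Qed.

Lemma Xrq1 q : Xrq q 1 = 'X.
Proof. by rewrite /Xrq /= Xpoly1 scaler0 subr0. Qed.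

Lemma Xrq2 q : Xrq q 2 = 'X * 'X - 1 - q%:R^-1 *: 1.
Proof. by rewrite /Xrq XpolySS Xpoly1 Xpoly0. Qed.

Lemma XrqSSS q r : Xrq q r.+3 = 'X * Xrq q r.+2 - Xrq q r.+1.
Proof.
rewrite /Xrq !XpolySS -!mul_polyC; case: r => [|r]; last by rewrite XpolySS; ring.
by rewrite Xpoly1 Xpoly0; ring.
Qed.

Lemma mxpeval_horner_mx m (M : 'M[algC]_m.+1) p : mxpeval p M = horner_mx M p.
Proof.
rewrite /horner_mx /horner_morph horner_coef size_map_poly.
by apply: eq_bigr => i _; rewrite coef_map -mulmxE mul_scalar_mx.
Qed.

(* [horner_mx] needs a nontrivial matrix ring, so dimension 0 is treated apart. *)
Lemma mx_dim0_eq (A B : 'M[algC]_0) : A = B.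
Proof. by rewrite [A]flatmx0 [B]flatmx0. Qed.

Section MxpevalMorphism.
Variables (m : nat) (M : 'M[algC]_m).

Lemma mxpevalB p p' : mxpeval (p - p') M = mxpeval p M - mxpeval p' M.
Proof.
case: m M => [|k] A; first exact: mx_dim0_eq.
by rewrite !mxpeval_horner_mx rmorphB.
Qed.

Lemma mxpevalZ a p : mxpeval (a *: p) M = a *: mxpeval p M.
Proof.
case: m M => [|k] A; first exact: mx_dim0_eq.
by rewrite !mxpeval_horner_mx linearZ.
Qed.

Lemma mxpevalXM p : mxpeval ('X * p) M = M *m mxpeval p M.
Proof.
case: m M => [|k] A; first exact: mx_dim0_eq.
by rewrite !mxpeval_horner_mx rmorphM /= horner_mx_X mulmxE.
Qed.

Lemma mxpeval1 : mxpeval 1 M = 1%:M.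
Proof.
case: m M => [|k] A; first exact: mx_dim0_eq.
by rewrite !mxpeval_horner_mx rmorph1.
Qed.

Lemma mxpevalX : mxpeval 'X M = M.
Proof. by rewrite -[X in mxpeval X]mulr1 mxpevalXM mxpeval1 mulmx1. Qed.
End MxpevalMorphism.

Definition Xrq_mx (q m : nat) (A : 'M[algC]_m) (r : nat) : 'M[algC]_m :=
  sqrtC q%:R ^+ r *: mxpeval (Xrq q r) ((sqrtC q%:R)^-1 *: A).

Section ScaledXrq.
Variables (q m : nat) (A : 'M[algC]_m).
Hypothesis q_gt0 : (0 < q)%N.

Local Notation s := (sqrtC (q%:R : algC)).

Let q_neq0 : (q%:R : algC) != 0. Proof. by rewrite pnatr_eq0 -lt0n. Qed.
Let s_neq0 : s != 0. Proof. by rewrite sqrtC_eq0. Qed.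

Lemma Xrq_mx0 : Xrq_mx q A 0 = 1%:M.
Proof. by rewrite /Xrq_mx Xrq0 mxpeval1 scale1r. Qed.

Lemma Xrq_mx1 : Xrq_mx q A 1 = A.
Proof. by rewrite /Xrq_mx Xrq1 mxpevalX scalerA mulfV ?scale1r. Qed.

Lemma Xrq_mx2 : Xrq_mx q A 2 = A *m A - (q.+1)%:R%:M.
Proof.
rewrite /Xrq_mx Xrq2 !mxpevalB mxpevalZ mxpevalXM mxpevalX mxpeval1.
rewrite !scalerBr -scalemxAl -scalemxAr !scalerA sqrtCK -mulrA -invfM -expr2 sqrtCK.
by rewrite !mulfV // !scale1r scalemx1 -addrA -opprD -raddfD /= natr1.
Qed.

Lemma Xrq_mxSSS r : Xrq_mx q A r.+3 = A *m Xrq_mx q A r.+2 - Xrq_mx q A r.+1 *+ q.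
Proof.
rewrite /Xrq_mx XrqSSS mxpevalB mxpevalXM scalerBr -scalemxAl -scalemxAr -scaler_nat !scalerA.
congr (_ *: _ - _ *: _); first by rewrite exprSr mulfK.
by rewrite -(addn2 r.+1) exprD sqrtCK mulrC.
Qed.
End ScaledXrq.

Lemma big_tuple_cons (V : nmodType) (T : finType) r (F : r.+1.-tuple T -> V) :
  \sum_(s : r.+1.-tuple T) F s = \sum_(x : T) \sum_(s : r.-tuple T) F (cons_tuple x s).
Proof.
rewrite pair_big (reindex (fun p : T * r.-tuple T => cons_tuple p.1 p.2)) //=.
exists (fun s : r.+1.-tuple T => (thead s, behead_tuple s)) => [[x s] _ | s _] /=.
  by congr pair; apply: val_inj.
exact/esym/tuple_eta.
Qed.

Lemma mxblockMn (V : nmodType) m n (p_ : 'I_m -> nat) (q_ : 'I_n -> nat)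
    (B : forall i j, 'M[V]_(p_ i, q_ j)) k :
  \mxblock_(i, j) (B i j *+ k) = \mxblock_(i, j) B i j *+ k.
Proof.
transitivity (\mxblock_(i, j) \sum_(l < k) B i j).
  by apply: eq_mxblock => i j; rewrite sumr_const card_ord.
by rewrite mxblock_sum sumr_const card_ord.
Qed.

Lemma scalar_mx_block (R : pzRingType) n N (a : R) :
  a%:M = \mxblock_(i < n, j < n) (if i == j then a%:M else 0 : 'M_N).
Proof.
rewrite -(mxdiagZ (p_ := fun=> N)) /mxdiag; apply: eq_mxblock => i j.
by case: ifP => // _; rewrite conform_mx_id.
Qed.

Section NonBacktrackingWalkSums.
Variables (R : pzRingType) (n : nat) (D : finType) (inv : D -> D) (o : D -> 'I_n).
Variable sigma : D -> R.

Local Notation t := (term inv o).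
Local Notation nbs := (nbstep inv o).

(* The sum of sigma-colors of the non-backtracking walks with r.+1 edges that
   start with the edge e and end at the vertex k. *)
Fixpoint nbwalk_sum r e k : R :=
  if r is r'.+1 then sigma e * \sum_(f | nbs e f) nbwalk_sum r' f k
  else if t e == k then sigma e else 0.

Lemma nbwalk_sumE r e k :
  \sum_(s : r.-tuple D | path nbs e s && (t (last e s) == k)) \prod_(x <- e :: s) sigma x
  = nbwalk_sum r e k.
Proof.
elim: r e => [|r IH] e /=.
  rewrite big_mkcond (big_pred1 [tuple]) => [|s]; last exact/esym/eqP/tuple0.
  by rewrite /= big_seq1; case: ifP.
rewrite big_mkcond big_tuple_cons mulr_sumr [RHS]big_mkcond; apply: eq_bigr => f _ /=.
have [_|] := boolP (nbs e f); last by rewrite big1.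
rewrite -IH mulr_sumr [RHS]big_mkcond; apply: eq_bigr => s _ /=.
by rewrite big_cons.
Qed.

Lemma nbwalk_sum_extend r i k :
  \sum_j (\sum_(e | (o e == i) && (t e == j)) sigma e) * (\sum_(f | o f == j) nbwalk_sum r f k)
  = \sum_(e | o e == i) nbwalk_sum r.+1 e k + \sum_(e | o e == i) sigma e * nbwalk_sum r (inv e) k.
Proof.
under eq_bigr do rewrite mulr_suml.
rewrite (exchange_big_dep (fun e => o e == i)) /=; last by move=> j e _ /andP[].
rewrite -big_split; apply: eq_bigr => e ei /=.
rewrite (big_pred1 (t e)) => [|j]; last by rewrite ei eq_sym.
rewrite -mulrDr (bigD1 (inv e)) //= addrC; congr (_ * (_ + _)).
by apply: eq_bigl => f; rewrite /nbstep eq_sym.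
Qed.

Hypothesis invK : involutive inv.
Hypothesis sigmaV : forall e, sigma e * sigma (inv e) = 1.
Variable q : nat.
Hypothesis o_regular : regular o q.

Lemma nbwalk_sum_backtrack0 i k :
  \sum_(e | o e == i) sigma e * nbwalk_sum 0 (inv e) k = if i == k then q.+1%:R else 0.
Proof.
rewrite (eq_bigr (fun=> if i == k then 1 else 0)) => [|e /eqP oe]; last first.
  by rewrite /= /term invK oe; case: ifP; rewrite ?sigmaV ?mulr0.
case: ifP => _; last by rewrite big1.
by rewrite -big_set sumr_const o_regular.
Qed.

Lemma nbwalk_sum_backtrackS r i k :
  \sum_(e | o e == i) sigma e * nbwalk_sum r.+1 (inv e) k
  = (\sum_(f | o f == i) nbwalk_sum r f k) *+ q.
Proof.
transitivity (\sum_(e | o e == i) \sum_(f | (o f == i) && (f != e)) nbwalk_sum r f k).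
  apply: eq_bigr => e /eqP oe /=; rewrite mulrA sigmaV mul1r.
  by apply: eq_bigl => f; rewrite /nbstep /term !invK oe eq_sym.
rewrite (exchange_big_dep (fun f => o f == i)) /=; last by move=> e f _ /andP[].
rewrite -sumrMnl; apply: eq_bigr => f /eqP fi.
rewrite -big_set sumr_const; congr (_ *+ _).
have := cardsD1 f [set e | o e == i]; rewrite o_regular inE fi eqxx add1n => -[->].
by apply: eq_card => e; rewrite !inE andbC eq_sym.
Qed.
End NonBacktrackingWalkSums.

Section ColoredNonBacktracking.
Variables (n : nat) (D : finType) (inv : D -> D) (o : D -> 'I_n).
Variables (N : nat) (sigma : D -> 'M[algC]_N).

Local Notation A := (colored_adj inv o sigma).
Local Notation A_ := (colored_nb inv o sigma).
Local Notation W := (nbwalk_sum inv o sigma).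

Lemma colored_nb_block r : A_ r.+1 = \mxblock_(i, k) \sum_(e | o e == i) W r e k.
Proof.
apply: eq_mxblock => i k; rewrite big_mkcond big_tuple_cons [RHS]big_mkcond.
apply: eq_bigr => e _ /=; rewrite -nbwalk_sumE big_mkcond.
have [oe|] := eqVneq (o e) i; last by rewrite big1 // => s _; rewrite andbF.
by rewrite [RHS]big_mkcond.
Qed.

Lemma colored_nb1 : A_ 1 = A.
Proof. by rewrite colored_nb_block; apply: eq_mxblock => i k; rewrite big_mkcondr. Qed.

Lemma colored_adj_mul_nb r :
  A *m A_ r.+1 = \mxblock_(i, k) (\sum_(e | o e == i) W r.+1 e k
                                  + \sum_(e | o e == i) sigma e * W r (inv e) k).
Proof.
rewrite colored_nb_block mul_mxblock; apply: eq_mxblock => i k.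
by rewrite -nbwalk_sum_extend; under eq_bigr do rewrite mulmxE.
Qed.

Hypothesis invK : involutive inv.
Hypothesis sigmaV : forall e, sigma e * sigma (inv e) = 1.
Variable q : nat.
Hypothesis o_regular : regular o q.

Lemma colored_nb2 : A_ 2 = A *m A - q.+1%:R%:M.
Proof.
rewrite -[X in _ *m X]colored_nb1 colored_adj_mul_nb colored_nb_block (scalar_mx_block n).
rewrite -mxblockB; apply: eq_mxblock => i k.
rewrite (nbwalk_sum_backtrack0 invK sigmaV o_regular).
by case: ifP => _; rewrite ?rmorph_nat ?addrK // subr0 addr0.
Qed.

Lemma colored_nbSSS r : A_ r.+3 = A *m A_ r.+2 - A_ r.+1 *+ q.
Proof.
rewrite colored_adj_mul_nb !colored_nb_block -mxblockMn -mxblockB.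
by apply: eq_mxblock => i k; rewrite (nbwalk_sum_backtrackS invK sigmaV o_regular) addrK.
Qed.
End ColoredNonBacktracking.

Lemma eq_from_recurrence (T : Type) (f : T -> T -> T) (u v : nat -> T) :
  u 1 = v 1 -> u 2 = v 2 ->
  (forall r, u r.+3 = f (u r.+2) (u r.+1)) -> (forall r, v r.+3 = f (v r.+2) (v r.+1)) ->
  forall r, u r.+1 = v r.+1.
Proof.
move=> eq1 eq2 urec vrec r; suff [] : u r.+1 = v r.+1 /\ u r.+2 = v r.+2 by [].
by elim: r => [|r [IH1 IH2]]; split=> //; rewrite urec vrec IH1 IH2.
Qed.

Theorem lemma3p1 (q : nat) (n : nat) (D : finType) (inv : D -> D) (o : D -> 'I_n)
  (N : nat) (Gs : {pred 'M[algC]_N}) (sigma : D -> 'M[algC]_N) :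
  (0 < q)%N ->
  graph_ok inv ->
  regular o q ->
  unitary_subgroup Gs ->
  is_color inv Gs sigma ->
  forall r : nat,
    colored_nb inv o sigma r =
    (sqrtC (q%:R : algC)) ^+ r *:
      mxpeval (Xrq q r) ((sqrtC (q%:R : algC))^-1 *: colored_adj inv o sigma).
Proof.
move=> q_gt0 [invK _] o_regular [_ _ _ Gs_unitary] [sigma_Gs sigma_inv].
have sigmaV e : sigma e * sigma (inv e) = 1.
  by rewrite sigma_inv -mulmxE mulmxV // unitarymx_unit // Gs_unitary.
case=> [|r]; first exact/esym/Xrq_mx0.
apply: (@eq_from_recurrence _ (fun B C => colored_adj inv o sigma *m B - C *+ q)
          (colored_nb inv o sigma) (Xrq_mx q (colored_adj inv o sigma))).
- by rewrite colored_nb1 Xrq_mx1.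
- by rewrite (colored_nb2 invK sigmaV o_regular) Xrq_mx2.
- exact: colored_nbSSS.
- exact: Xrq_mxSSS.
Qed.
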